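(* Let $\lambda=\inf\{u : |\mathrm{GHZ}\rangle^{\otimes\lfloor un\rfloor}\stackrel{\textrm{SLOCC}}{\longrightarrow}|\Phi^3\rangle^{\otimes n}\text{ for all sufficiently large } n\}$. Then $\lambda=\omega$, the exponent of matrix multiplication, i.e. the smallest real number $\omega$ such that two $N\times N$ matrices can be multiplied using $O(N^{\omega})$ multiplications, each being a product of a linear function of the entries of the first matrix and a linear function of the entries of the second matrix.
   Context: Three parties $A,B,C$. $|\mathrm{GHZ}\rangle=\frac{1}{\sqrt2}(|000\rangle+|111\rangle)$ with one qubit held by each party. Let $|\Phi\rangle=|00\rangle+|11\rangle$. $|\Phi^3\rangle=|\Phi\rangle_{AB}|\Phi\rangle_{AC}|\Phi\rangle_{BC}$ is the state in which each pair of parties shares one EPR state (each party holds two qubits). Tensor powers are taken with each party holding its own parts of all copies. $|\psi\rangle\stackrel{\textrm{SLOCC}}{\longrightarrow}|\phi\rangle$ means $|\psi\rangle$ can be transformed into $|\phi\rangle$ with nonzero probability by local operations and classical communication; equivalently, there exist linear operators $A,B,C$ on the respective parties' spaces with $(A\otimes B\otimes C)|\psi\rangle=|\phi\rangle$ up to a nonzero scalar. *)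

From HB Require Import structures.
From mathcomp Require Import all_boot all_order all_algebra.
From mathcomp Require Import all_classical all_reals all_analysis.
From mathcomp Require Import complex.
Set Implicit Arguments. Unset Strict Implicit. Unset Printing Implicit Defensive.
Import Order.TTheory GRing.Theory Num.Theory.
Local Open Scope ring_scope.
Local Open Scope classical_set_scope.

(* A tripartite (unnormalised) state on local bases X, Y, Z: its coefficients. *)
Definition tensor3 (K : Type) (X Y Z : finType) := X -> Y -> Z -> K.

Definition slocc (K : fieldType) (X Y Z X' Y' Z' : finType)
  (psi : tensor3 K X Y Z) (phi : tensor3 K X' Y' Z') : Prop :=
  exists (A : X' -> X -> K) (B : Y' -> Y -> K) (D : Z' -> Z -> K) (c : K),
    c != 0 /\
    forall x' y' z',
      \sum_(x : X) \sum_(y : Y) \sum_(z : Z) A x' x * B y' y * D z' z * psi x y z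
      = c * phi x' y' z'.

(* m-th tensor power, each party holding its own parts of all m copies. *)
Definition tpow (K : comNzRingType) (X Y Z : finType) (T : tensor3 K X Y Z) (m : nat)
  : tensor3 K {ffun 'I_m -> X} {ffun 'I_m -> Y} {ffun 'I_m -> Z} :=
  fun x y z => \prod_(i < m) T (x i) (y i) (z i).

Arguments tpow {K X Y Z} T m.

Definition GHZ (R : realType) : tensor3 (complex R) bool bool bool :=
  fun a b c => (sqrtC 2)^-1 * ((a == b) && (b == c))%:R.

Definition EPR (K : nzRingType) (a b : bool) : K := (a == b)%:R.

(* |Phi^3> = |Phi>_AB |Phi>_AC |Phi>_BC.  A holds (its AB qubit, its AC qubit),
   B holds (its AB qubit, its BC qubit), C holds (its AC qubit, its BC qubit). *)
Definition Phi3 (K : nzRingType) : tensor3 K (bool * bool)%type (bool * bool)%type (bool * bool)%type :=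
  fun a b c => @EPR K a.1 b.1 * @EPR K a.2 c.1 * @EPR K b.2 c.2.

Definition lambda_set (R : realType) : set R :=
  [set u | 0 <= u /\ exists n0 : nat, forall n : nat, (n0 <= n)%N ->
     slocc (tpow (GHZ R) (Num.truncn (u * n%:R))) (tpow (Phi3 (complex R)) n)].

Definition lambda_GHZ (R : realType) : R := inf (@lambda_set R).

Definition bilinear_mm_alg (K : comNzRingType) (N r : nat) : Prop :=
  exists (U V W : 'I_r -> 'M[K]_N),
    forall (A B : 'M[K]_N) (i j : 'I_N),
      (A *m B) i j =
      \sum_(k < r) W k i j *
         ((\sum_(a < N) \sum_(b < N) U k a b * A a b) *
          (\sum_(a < N) \sum_(b < N) V k a b * B a b)).

Definition omega_set (R : realType) : set R :=
  [set tau | exists (c : R) (N0 : nat), forall N : nat, (N0 <= N)%N ->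
     exists r : nat, bilinear_mm_alg (complex R) N r /\ r%:R <= c * (N%:R `^ tau)].

Definition omega_mm (R : realType) : R := inf (@omega_set R).

(* Both sides are governed by the tensor rank of the matrix multiplication
   tensor <N,N,N>.  Local maps applied to GHZ^m produce exactly the tensors of
   rank at most 2^m, and (Phi^3)^n is <2^n,2^n,2^n> up to a relabelling of the
   local bases; on the other hand a bilinear algorithm with r multiplications
   is the same thing as a rank-r decomposition of <N,N,N>.  Hence
   GHZ^m -> (Phi^3)^n iff <2^n,2^n,2^n> can be computed with 2^m
   multiplications, and comparing the two growth rates gives lambda = omega
   (sizes N that are not powers of 2 are padded to the next power of 2). *)

From HB Require Import structures.
From mathcomp Require Import all_boot all_order all_algebra.
From mathcomp Require Import all_classical all_reals all_analysis.
From mathcomp Require Import complex ring lra.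
Set Implicit Arguments. Unset Strict Implicit. Unset Printing Implicit Defensive.
Import Order.TTheory GRing.Theory Num.Theory.
Local Open Scope ring_scope.
Local Open Scope classical_set_scope.

Section TensorDecomposition.
Variable K : comNzRingType.

Lemma big_only_one (I : finType) (j : I) (G : I -> K) :
  (forall i, i != j -> G i = 0) -> \sum_i G i = G j.
Proof. by move=> G0; rewrite (bigD1 j) //= big1 ?addr0. Qed.
Arguments big_only_one {I} j {G}.

Lemma prod_nat_of_bool (I : finType) (P : pred I) :
  \prod_(i : I) ((P i)%:R : K) = ([forall i, P i])%:R.
Proof.
have [/forallP PI | /forallPn [i Pi]] := boolP [forall i, P i].
  by rewrite big1 // => i _; rewrite PI.
by rewrite (bigD1 i) //= (negbTE Pi) mul0r.
Qed.

Definition decomposable (X Y Z : finType) (T : tensor3 K X Y Z) (I : finType) :=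
  exists (al : I -> X -> K) (be : I -> Y -> K) (ga : I -> Z -> K),
    forall x y z, T x y z = \sum_k al k x * be k y * ga k z.

Lemma decomposable_restrict (X Y Z X' Y' Z' : finType) (T : tensor3 K X Y Z)
    (T' : tensor3 K X' Y' Z') (I : finType)
    (f : X -> X') (g : Y -> Y') (h : Z -> Z') :
  (forall x y z, T x y z = T' (f x) (g y) (h z)) ->
  decomposable T' I -> decomposable T I.
Proof.
move=> TE [al [be [ga T'E]]].
exists (fun k x => al k (f x)), (fun k y => be k (g y)), (fun k z => ga k (h z)).
by move=> x y z; rewrite TE T'E.
Qed.

Lemma decomposable_widen (X Y Z : finType) (T : tensor3 K X Y Z) (I J : finType) :
  (#|I| <= #|J|)%N -> decomposable T I -> decomposable T J.
Proof.
move=> leIJ [al [be [ga TE]]].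
pose f (i : I) : J := enum_val (widen_ord leIJ (enum_rank i)).
have f_inj : injective f.
  by move=> i1 i2 /enum_val_inj /(congr1 val) /= /val_inj /enum_rank_inj.
pose ext (F : I -> _ -> K) j u := if [pick i | f i == j] is Some i then F i u else 0.
exists (ext _ al), (ext _ be), (ext _ ga) => x y z.
rewrite TE (partition_big f predT) //=; apply: eq_bigr => j _.
rewrite /ext; case: pickP => [i0 /eqP fi0 | nf].
  rewrite (big_pred1 i0) // => i /=; apply/eqP/eqP => [fi | -> //].
  by apply: f_inj; rewrite fi fi0.
by rewrite big_pred0 ?mul0r // => i; exact: nf.
Qed.

(* The matrix multiplication tensor <N,N,N>: its coefficient at
   ((a,b),(c,d),(i,j)) is the coefficient of A a b * B c d in (A *m B) i j. *)
Definition mm_tensor (N : nat) :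
    tensor3 K ('I_N * 'I_N)%type ('I_N * 'I_N)%type ('I_N * 'I_N)%type :=
  fun x y z => ((x.1 == z.1) && (x.2 == y.1) && (y.2 == z.2))%:R.
Arguments mm_tensor N : clear implicits.

Lemma sum_delta_mx N (F : 'I_N -> 'I_N -> K) a b :
  \sum_a' \sum_b' F a' b' * delta_mx a b a' b' = F a b.
Proof.
rewrite (big_only_one a) => [|a' /negbTE a'a]; last first.
  by rewrite big1 // => b' _; rewrite mxE a'a mulr0.
rewrite (big_only_one b) => [|b' /negbTE b'b]; last by rewrite mxE b'b andbF mulr0.
by rewrite mxE !eqxx mulr1.
Qed.

Lemma mulmx_mm_tensor N (A B : 'M[K]_N) i j :
  (A *m B) i j =
  \sum_a \sum_b \sum_c \sum_d A a b * B c d * mm_tensor N (a, b) (c, d) (i, j).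
Proof.
rewrite mxE [RHS](big_only_one i) => [|a ai]; last first.
  rewrite big1 // => b _; rewrite big1 // => c _; rewrite big1 // => d _.
  by rewrite /mm_tensor /= (negbTE ai) mulr0.
apply: eq_bigr => b _; rewrite [RHS](big_only_one b) => [|c cb]; last first.
  by rewrite big1 // => d _; rewrite /mm_tensor /= eq_sym (negbTE cb) andbF mulr0.
rewrite (big_only_one j) => [|d dj]; last first.
  by rewrite /mm_tensor /= (negbTE dj) andbF mulr0.
by rewrite /mm_tensor /= !eqxx mulr1.
Qed.

Lemma bilinear_mm_alg_decomposable N r :
  bilinear_mm_alg K N r -> decomposable (mm_tensor N) 'I_r.
Proof.
case=> U [V [W UVW]].
exists (fun k x => U k x.1 x.2), (fun k y => V k y.1 y.2), (fun k z => W k z.1 z.2).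
move=> [a b] [c d] [i j] /=.
(* Evaluate the algorithm at the matrix units E_ab and E_cd. *)
have := UVW (delta_mx a b) (delta_mx c d) i j.
rewrite !mxE.
under [in X in X = _ -> _]eq_bigr do rewrite !mxE.
under [in X in _ = X -> _]eq_bigr do rewrite !sum_delta_mx.
rewrite (big_only_one b) => [|l /negbTE lb]; last by rewrite lb andbF mul0r.
rewrite !eqxx andbT => E.
under eq_bigr do rewrite mulrC.
rewrite -E /mm_tensor /= [i == a]eq_sym [j == d]eq_sym.
by case: (a == i); case: (b == c); case: (d == j); rewrite ?mulr1 ?mulr0 ?mul0r ?mul1r.
Qed.

Lemma decomposable_bilinear_mm_alg N r :
  decomposable (mm_tensor N) 'I_r -> bilinear_mm_alg K N r.
Proof.
case=> al [be [ga TE]].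
exists (fun k => \matrix_(a, b) al k (a, b)), (fun k => \matrix_(a, b) be k (a, b)),
  (fun k => \matrix_(a, b) ga k (a, b)) => A B i j.
rewrite mulmx_mm_tensor; symmetry.
transitivity (\sum_k \sum_a \sum_b \sum_c \sum_d
    ga k (i, j) * (al k (a, b) * A a b) * (be k (c, d) * B c d)).
  apply: eq_bigr => k _; rewrite !mxE mulr_suml mulr_sumr; apply: eq_bigr => a _.
  rewrite mulr_suml mulr_sumr; apply: eq_bigr => b _.
  rewrite !mulr_sumr; apply: eq_bigr => c _; rewrite !mulr_sumr; apply: eq_bigr => d _.
  by rewrite !mxE; ring.
rewrite exchange_big; apply: eq_bigr => a _; rewrite exchange_big; apply: eq_bigr => b _.
rewrite exchange_big; apply: eq_bigr => c _; rewrite exchange_big; apply: eq_bigr => d _.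
by rewrite TE mulr_sumr; apply: eq_bigr => k _; ring.
Qed.

Lemma bilinear_mm_algE N r :
  bilinear_mm_alg K N r <-> decomposable (mm_tensor N) 'I_r.
Proof.
by split; [exact: bilinear_mm_alg_decomposable | exact: decomposable_bilinear_mm_alg].
Qed.

End TensorDecomposition.

Arguments decomposable {K X Y Z} T I.
Arguments mm_tensor {K} N.
Arguments big_only_one {K I} j {G}.

Section GHZPowers.
Variable R : realType.
Local Notation C := (complex R).
Local Notation sqrt2_inv := ((sqrtC (2 : C))^-1).

Lemma tpow_GHZE m x y z :
  tpow (GHZ R) m x y z = sqrt2_inv ^+ m * ((x == y) && (y == z))%:R.
Proof.
rewrite /tpow /GHZ big_split /= prodr_const card_ord prod_nat_of_bool.
congr (_ * (nat_of_bool _)%:R).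
apply/forallP/andP => [xyz | [/eqP-> /eqP->] i]; last by rewrite !eqxx.
by split; apply/eqP/ffunP => i; case/andP: (xyz i) => /eqP ? /eqP.
Qed.

(* The coefficients of GHZ^m are concentrated on the diagonal, so a local
   image of it is a sum of [2^m] simple tensors. *)
Lemma local_image_tpow_GHZ m (X' Y' Z' : finType) (A : X' -> {ffun 'I_m -> bool} -> C)
    (B : Y' -> {ffun 'I_m -> bool} -> C) (D : Z' -> {ffun 'I_m -> bool} -> C) x' y' z' :
  \sum_x \sum_y \sum_z A x' x * B y' y * D z' z * tpow (GHZ R) m x y z
  = sqrt2_inv ^+ m * \sum_x A x' x * B y' x * D z' x.
Proof.
rewrite mulr_sumr; apply: eq_bigr => x _.
rewrite (big_only_one x) => [|y yx]; last first.
  by rewrite big1 // => z _; rewrite tpow_GHZE eq_sym (negbTE yx) !mulr0.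
rewrite (big_only_one x) => [|z zx]; last first.
  by rewrite tpow_GHZE eq_sym (negbTE zx) andbF !mulr0.
by rewrite tpow_GHZE !eqxx mulr1 mulrC.
Qed.

Lemma slocc_tpow_GHZE m (X' Y' Z' : finType) (T : tensor3 C X' Y' Z') :
  slocc (tpow (GHZ R) m) T <-> decomposable T {ffun 'I_m -> bool}.
Proof.
have s_neq0 : sqrt2_inv ^+ m != 0.
  by rewrite expf_neq0 // invr_eq0 sqrtC_eq0 pnatr_eq0.
split=> [[A [B [D [c [c_neq0 ABD]]]]] | [al [be [ga TE]]]].
  exists (fun k x' => c^-1 * sqrt2_inv ^+ m * A x' k), (fun k y' => B y' k),
    (fun k z' => D z' k) => x y z.
  apply: (mulfI c_neq0); rewrite -ABD local_image_tpow_GHZ !mulr_sumr.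
  by apply: eq_bigr => k _; rewrite !mulrA mulfV // mul1r.
exists (fun x' k => al k x'), (fun y' k => be k y'), (fun z' k => ga k z'),
  (sqrt2_inv ^+ m); split=> // x' y' z'.
by rewrite (local_image_tpow_GHZ (fun x' k => al k x') (fun y' k => be k y')
  (fun z' k => ga k z')) TE.
Qed.

End GHZPowers.

Section PhiCubedPowers.
Variables (K : comNzRingType) (n : nat).
Local Notation qubits := {ffun 'I_n -> bool}.
Local Notation qubit_pairs := {ffun 'I_n -> (bool * bool)%type}.

Definition ffun_fst (a : qubit_pairs) : qubits := [ffun i => (a i).1].
Definition ffun_snd (a : qubit_pairs) : qubits := [ffun i => (a i).2].
Definition ffun_pair (u v : qubits) : qubit_pairs := [ffun i => (u i, v i)].

Lemma ffun_fst_pair u v : ffun_fst (ffun_pair u v) = u.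
Proof. by apply/ffunP => i; rewrite !ffunE. Qed.

Lemma ffun_snd_pair u v : ffun_snd (ffun_pair u v) = v.
Proof. by apply/ffunP => i; rewrite !ffunE. Qed.

Lemma tpow_Phi3E (a b c : qubit_pairs) :
  tpow (Phi3 K) n a b c =
  ((ffun_fst a == ffun_fst b) && (ffun_snd a == ffun_fst c)
   && (ffun_snd b == ffun_snd c))%:R.
Proof.
rewrite /tpow /Phi3 /EPR; under eq_bigr do rewrite -!natrM !mulnb.
rewrite prod_nat_of_bool; congr (nat_of_bool _)%:R.
apply/forallP/andP => [abc | [/andP [/eqP ab /eqP ac] /eqP bc] i].
  split; [apply/andP; split|]; apply/eqP/ffunP => i; rewrite !ffunE;
  by case/andP: (abc i) => /andP [/eqP ? /eqP ?] /eqP.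
move/ffunP/(_ i): ab; move/ffunP/(_ i): ac; move/ffunP/(_ i): bc.
by rewrite !ffunE => -> -> ->; rewrite !eqxx.
Qed.

(* (Phi^3)^n is the matrix multiplication tensor <2^n,2^n,2^n>: party A's
   register indexes the matrix entry (row = AC-half, column = AB-half). *)
Lemma decomposable_tpow_Phi3E (I : finType) :
  decomposable (tpow (Phi3 K) n) I <-> decomposable (@mm_tensor K #|qubits|) I.
Proof.
split.
  apply: (decomposable_restrict
    (f := fun x => ffun_pair (enum_val x.2) (enum_val x.1))
    (g := fun y => ffun_pair (enum_val y.1) (enum_val y.2))
    (h := fun z => ffun_pair (enum_val z.1) (enum_val z.2))) => x y z /=.
  rewrite tpow_Phi3E !ffun_fst_pair !ffun_snd_pair /mm_tensor !(inj_eq enum_val_inj).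
  by case: (x.1 == z.1); case: (x.2 == y.1).
apply: (decomposable_restrict
  (f := fun a => (enum_rank (ffun_snd a), enum_rank (ffun_fst a)))
  (g := fun b => (enum_rank (ffun_fst b), enum_rank (ffun_snd b)))
  (h := fun c => (enum_rank (ffun_fst c), enum_rank (ffun_snd c)))) => a b c /=.
rewrite tpow_Phi3E /mm_tensor /= !(inj_eq enum_rank_inj).
by case: (_ == _); case: (_ == _).
Qed.

End PhiCubedPowers.

Section BilinearAlgorithms.
Variable K : comNzRingType.

Lemma bilinear_mm_alg_shrink N N' r : (N <= N')%N ->
  bilinear_mm_alg K N' r -> bilinear_mm_alg K N r.
Proof.
move=> leNN' /bilinear_mm_algE alg; apply/bilinear_mm_algE.
pose w (x : 'I_N * 'I_N) := (widen_ord leNN' x.1, widen_ord leNN' x.2).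
apply: (decomposable_restrict (f := w) (g := w) (h := w) _ alg) => x y z.
have widen_eq (a b : 'I_N) : (widen_ord leNN' a == widen_ord leNN' b) = (a == b).
  by apply/eqP/eqP => [/(congr1 val) /= /val_inj | ->].
by rewrite /mm_tensor /= !widen_eq.
Qed.

Lemma bilinear_mm_alg_naive N : bilinear_mm_alg K N (N * N * N).
Proof.
have -> : (N * N * N)%N = #|{: ('I_N * 'I_N) * 'I_N}| by rewrite !card_prod card_ord.
apply/bilinear_mm_algE/(@decomposable_widen _ _ _ _ _ {: ('I_N * 'I_N) * 'I_N});
  first by rewrite card_ord.
exists (fun k x => (x == k.1)%:R), (fun k y => (y == (k.1.2, k.2))%:R),
  (fun k z => (z == (k.1.1, k.2))%:R) => [[a b] [c d] [i j]].
rewrite (big_only_one ((a, b), d)) => [|[[p q] t] k_neq].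
  rewrite /mm_tensor /= !xpair_eqE !eqxx /= [c == b]eq_sym [i == a]eq_sym [j == d]eq_sym.
  by case: (a == i); case: (b == c); case: (d == j); rewrite ?mulr1 ?mulr0 ?mul0r ?mul1r.
have [/andP [/eqP ap /eqP bq] | ab_neq] := boolP ((a == p) && (b == q)).
  subst p q; have /negbTE dt : d != t by apply: contra k_neq => /eqP ->.
  by rewrite !xpair_eqE dt andbF mulr0 mul0r.
by rewrite xpair_eqE (negbTE ab_neq) !mul0r.
Qed.

Lemma bilinear_mm_alg_gt0 N r : (0 < N)%N -> bilinear_mm_alg K N r -> (0 < r)%N.
Proof.
move=> N_gt0 /bilinear_mm_algE; case: r => [|r] // [al [be [ga TE]]].
pose o := Ordinal N_gt0.
by have /eqP := TE (o, o) (o, o) (o, o); rewrite big_ord0 /mm_tensor /= ?eqxx oner_eq0.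
Qed.

End BilinearAlgorithms.

Lemma slocc_GHZ_Phi3E (R : realType) m n :
  slocc (tpow (GHZ R) m) (tpow (Phi3 (complex R)) n) <->
  exists r, (r <= 2 ^ m)%N /\ bilinear_mm_alg (complex R) (2 ^ n) r.
Proof.
have card_qubits k : #|{ffun 'I_k -> bool}| = (2 ^ k)%N.
  by rewrite card_ffun card_bool card_ord.
rewrite slocc_tpow_GHZE decomposable_tpow_Phi3E card_qubits; split=> [dec | [r [le_r_2m]]].
  exists (2 ^ m)%N; split=> //; apply/bilinear_mm_algE.
  by apply: decomposable_widen dec; rewrite card_ord card_qubits.
move/bilinear_mm_algE; apply: decomposable_widen.
by rewrite card_ord card_qubits.
Qed.

Section Exponents.
Variable R : realType.

Lemma powR2_growth (d c : R) : 0 < d ->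
  exists n0 : nat, forall n : nat, (n0 <= n)%N -> c <= 2 `^ (d * n%:R).
Proof.
move=> d_gt0; have ln2_gt0 : 0 < ln (2 : R) by rewrite ln_gt0 // ltr1n.
have dln2_gt0 : 0 < d * ln 2 by rewrite mulr_gt0.
exists (Num.truncn (c / (d * ln 2))).+1 => n le_n0n.
have : c / (d * ln 2) < n%:R by apply: lt_le_trans (truncnS_gt _) _; rewrite ler_nat.
rewrite ltr_pdivrMr // => lt_cn.
rewrite /powR pnatr_eq0 /=; apply: le_trans (expR_ge1Dx _).
have -> : d * n%:R * ln 2 = n%:R * (d * ln 2) by ring.
lra.
Qed.

Lemma natr_exp2 (k : nat) : ((2 ^ k)%N%:R : R) = 2 `^ k%:R.
Proof. by rewrite natrX powR_mulrn. Qed.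

Lemma natr_exp2_powR (k : nat) (x : R) : ((2 ^ k)%N%:R : R) `^ x = 2 `^ (x * k%:R).
Proof. by rewrite natr_exp2 -powRrM mulrC. Qed.

(* [P N r] reads "N x N matrices can be multiplied with r multiplications". *)
Variable P : nat -> nat -> Prop.
Hypothesis P_shrink : forall N N' r, (N <= N')%N -> P N' r -> P N r.
Hypothesis P_naive : forall N, P N (N * N * N)%N.
Hypothesis P_gt0 : forall N r, (0 < N)%N -> P N r -> (0 < r)%N.

Definition dyadic_rate_set : set R := [set u | 0 <= u /\ exists n0 : nat,
  forall n : nat, (n0 <= n)%N ->
    exists r, (r <= 2 ^ Num.truncn (u * n%:R))%N /\ P (2 ^ n)%N r].

Definition exponent_set : set R := [set tau | exists (c : R) (N0 : nat),
  forall N : nat, (N0 <= N)%N -> exists r : nat, P N r /\ r%:R <= c * (N%:R `^ tau)].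

Lemma exponent_set_ge0 tau : exponent_set tau -> 0 <= tau.
Proof.
move=> [c [N0 cost]]; rewrite leNgt; apply/negP => tau_lt0.
have [n1 grow] := powR2_growth (c + 1) (ltac:(by rewrite oppr_gt0) : 0 < - tau).
pose n := maxn N0 n1.
have le_N0_2n : (N0 <= 2 ^ n)%N.
  by apply: leq_trans (ltnW (ltn_expl n (ltnSn 1))); exact: leq_maxl.
have [r [Pr le_r]] := cost _ le_N0_2n.
have r_ge1 : (1 : R) <= r%:R by rewrite ler1n; exact: P_gt0 (expn_gt0 2 n) Pr.
have := grow n (leq_maxr _ _).
set y := 2 `^ (- tau * n%:R) => le_cy; have y_gt0 : 0 < y by rewrite powR_gt0.
have y_inv : 2 `^ (tau * n%:R) = y^-1 by rewrite /y -powRN mulNr opprK.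
rewrite natr_exp2_powR y_inv in le_r.
have := le_trans r_ge1 le_r; rewrite -/(c / y) ler_pdivlMr // mul1r; lra.
Qed.

Lemma exponent_set3 : exponent_set 3.
Proof.
exists 1, 0%N => N _; exists (N * N * N)%N; split; first exact: P_naive.
by rewrite mul1r powR_mulrn // -natrX ler_nat !expnS expn0 muln1 mulnA.
Qed.

(* Pad N up to the next power of two. *)
Lemma dyadic_rate_exponent : dyadic_rate_set `<=` exponent_set.
Proof.
move=> u [u_ge0 [n0 cost]]; exists (2 `^ u), (2 ^ n0)%N => N le_N.
have N_gt0 : (0 < N)%N by apply: leq_trans le_N; rewrite expn_gt0.
pose t := trunc_log 2 N.
have N_lt : (N < 2 ^ t.+1)%N by exact: trunc_log_ltn.
have le_n0t : (n0 <= t.+1)%N.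
  by rewrite -(@leq_exp2l 2) // ltnW // (leq_ltn_trans le_N).
have [r [le_r Pr]] := cost _ le_n0t.
exists r; split; first exact: P_shrink (ltnW N_lt) Pr.
apply: le_trans (_ : (2 ^ Num.truncn (u * t.+1%:R))%N%:R <= _); first by rewrite ler_nat.
rewrite natr_exp2; apply: le_trans (_ : 2 `^ (u * t.+1%:R) <= _).
  by apply: ler_powR; [rewrite ler1n | rewrite truncn_le mulr_ge0].
rewrite -natr_exp2_powR -powRM //; apply: ge0_ler_powR => //; rewrite ?nnegrE //.
by rewrite -natrM ler_nat expnS leq_mul2l trunc_logP.
Qed.

Lemma exponent_setN0 : exponent_set !=set0.
Proof. by exists 3; exact: exponent_set3. Qed.

(* Above the exponent, the slack 2^((u - tau) n) eventually absorbs the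
   constant and the rounding of u n. *)
Lemma dyadic_rate_gt_inf u : inf exponent_set < u -> dyadic_rate_set u.
Proof.
move=> lt_inf_u; have [tau [c [N0 cost]] lt_tau_u] := inf_lt exponent_setN0 lt_inf_u.
have u_ge0 : 0 <= u.
  apply: le_trans (ltW lt_inf_u); apply: lb_le_inf exponent_setN0 _.
  by move=> ? /exponent_set_ge0.
have [n1 grow] := powR2_growth (2 * c) (ltac:(by rewrite subr_gt0) : 0 < u - tau).
split=> //; exists (maxn N0 n1) => n le_n.
have le_N0_2n : (N0 <= 2 ^ n)%N.
  apply: leq_trans (ltnW (ltn_expl n (ltnSn 1))).
  by apply: leq_trans le_n; exact: leq_maxl.
have [r [Pr le_r]] := cost _ le_N0_2n.
exists r; split=> //; rewrite -(ler_nat R) natr_exp2.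
set k := Num.truncn (u * n%:R).
have round : 2 `^ (u * n%:R) <= 2 * 2 `^ k%:R.
  apply: le_trans (_ : 2 `^ (k.+1%:R) <= _).
    by apply: ler_powR; [rewrite ler1n | exact/ltW/truncnS_gt].
  by rewrite [k.+1%:R]mulrSr powRD ?pnatr_eq0 ?implybT // powRr1 // mulrC.
have split_u : 2 `^ (u * n%:R) = 2 `^ (tau * n%:R) * 2 `^ ((u - tau) * n%:R).
  by rewrite -powRD ?pnatr_eq0 ?implybT //; congr (_ `^ _); ring.
rewrite natr_exp2_powR in le_r.
have slack := grow n (leq_trans (leq_maxr _ _) le_n).
have : 2 * c * 2 `^ (tau * n%:R) <= 2 `^ ((u - tau) * n%:R) * 2 `^ (tau * n%:R).
  by apply: ler_wpM2r => //; apply: powR_ge0.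
nra.
Qed.

Lemma inf_dyadic_rate_set : inf dyadic_rate_set = inf exponent_set.
Proof.
apply/eqP; rewrite eq_le; apply/andP; split.
  apply/ler_addgt0Pr => e e_gt0; apply: ge_inf; first by exists 0 => ? [].
  by apply: dyadic_rate_gt_inf; lra.
apply: lb_le_inf => [|u /dyadic_rate_exponent]; last first.
  by apply: ge_inf; exists 0 => ? /exponent_set_ge0.
by exists (inf exponent_set + 1); apply: dyadic_rate_gt_inf; lra.
Qed.

End Exponents.

Theorem theorem1 (R : realType) : lambda_GHZ R = omega_mm R.
Proof.
rewrite /lambda_GHZ /omega_mm.
have -> : @lambda_set R = dyadic_rate_set (bilinear_mm_alg (complex R)).
  by apply/seteqP; split=> u [u_ge0 [n0 conv]]; split=> //; exists n0 => n /conv;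
    rewrite slocc_GHZ_Phi3E.
apply: inf_dyadic_rate_set.
- exact: bilinear_mm_alg_shrink.
- exact: bilinear_mm_alg_naive.
- exact: bilinear_mm_alg_gt0.
Qed.
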